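(* Let $t\ge0$, let $b_0,\dots,b_t\ge0$ be integers, let $M=\{0^{(b_0)},1^{(b_1)},\dots,t^{(b_t)}\}$ be the multiset containing $b_i$ copies of $i$, and let $0\le k\le t$. Then the number of $k$-vn-arrangements of $M$ is \[\binom{b_0+b_1+\cdots+b_k}{b_0,b_1,\dots,b_k}\prod_{i=1}^{t-k}\binom{b_i+b_{i+1}+\cdots+b_{i+k}}{b_{i+k}}.\]
   Context: Let $b=b_0+\cdots+b_t$. A $k$-vn-arrangement of $M$ is a sequence $(v_1,\dots,v_b)$ listing the elements of $M$ with their multiplicities such that $v_{i+1}-v_i\le k$ for all $1\le i<b$. The first factor is a multinomial coefficient, and an empty product equals $1$. *)

From mathcomp Require Import all_boot.
Set Implicit Arguments. Unset Strict Implicit. Unset Printing Implicit Defensive.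

Definition vn_multiset (t : nat) (b : nat -> nat) : seq nat :=
  flatten [seq nseq (b i) i | i <- iota 0 t.+1].

(* A k-vn-arrangement condition on a listing (v_1,...,v_b): v_{i+1} - v_i <= k
   (difference taken in the integers; i.e. v_{i+1} <= v_i + k). *)
Definition vn_step (k : nat) (x y : nat) : bool := y <= x + k.

Definition is_vn_arrangement (k : nat) (s : seq nat) : bool :=
  sorted (vn_step k) s.

(* Number of k-vn-arrangements of M: distinct sequences listing M with multiplicities
   (seq.permutations is duplicate-free) satisfying the step condition. *)
Definition num_vn_arrangements (t : nat) (b : nat -> nat) (k : nat) : nat :=
  count (is_vn_arrangement k) (permutations (vn_multiset t b)).

Definition multinomial (ns : seq nat) : nat :=
  (sumn ns)`! %/ \prod_(n <- ns) n`!.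

From mathcomp Require Import all_boot zify.
Set Implicit Arguments. Unset Strict Implicit. Unset Printing Implicit Defensive.

(* Let m = t be the largest value.  Deleting the copies of m from a k-vn-arrangement
   leaves a k-vn-arrangement of the smaller values, since every element is < m and
   the element preceding a block of m's is >= m - k.  Conversely, the copies of m
   may be put into an arrangement w only at the front, after an element >= m - k,
   or after another m: if w has c elements >= m - k, these are c + 1 slots, so
   there are C(c + b_t, b_t) ways.  Induction on t gives
   prod_(i <= t) C(b_{i-k} + ... + b_i, b_i) (terms b_j with j < 0 omitted),
   whose first k + 1 factors form the multinomial coefficient. *)

Lemma filter_pred1_nseq (T : eqType) (x : T) (s : seq T) :
  filter (pred1 x) s = nseq (count_mem x s) x.
Proof. by elim: s => //= y s ->; case: eqP => [->|]. Qed.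

Lemma mem_map_cons (T : eqType) (a y : T) (u : seq T) (L : seq (seq T)) :
  (y :: u \in map (cons a) L) = (y == a) && (u \in L).
Proof.
apply/mapP/andP => [[v Lv [-> ->]] | [/eqP -> Lu]]; last by exists u.
by rewrite eqxx.
Qed.

Lemma nil_notin_map_cons (T : eqType) (a : T) (L : seq (seq T)) :
  [::] \notin map (cons a) L.
Proof. by apply/mapP => -[]. Qed.

Lemma perm_cat_nseq (T : eqType) (m : T) (s u : seq T) n : m \notin s ->
  perm_eq u (s ++ nseq n m) =
  perm_eq (filter (predC1 m) u) s && (count_mem m u == n).
Proof.
move=> ms; apply/idP/andP => [su | [su /eqP <-]].
  split.
    have s_m : all (predC1 m) s by apply/allP => x xs; apply: contraNneq ms => <-.
    have := perm_filter (predC1 m) su.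
    by rewrite filter_cat filter_nseq /= eqxx (all_filterP s_m) cats0.
  by rewrite (permP su) count_cat count_nseq /= eqxx mul1n (count_memPn ms).
rewrite -(permPl (permEl (perm_filterC (predC1 m) u))) perm_cat //.
by rewrite (eq_filter (a2 := pred1 m)) ?filter_pred1_nseq // => x; apply: negbK.
Qed.

Lemma uniq_flatten_map (S T : eqType) (f : S -> seq T) (key : T -> S) (W : seq S) :
  uniq W -> {in W, forall w, uniq (f w) /\ {in f w, forall u, key u = w}} ->
  uniq (flatten (map f W)).
Proof.
elim: W => //= w W IHW /andP[wW uW] fW.
have inW w' : w' \in W -> w' \in w :: W by move=> w'W; rewrite inE w'W orbT.
have [uf keyf] := fW w (mem_head w W).
rewrite cat_uniq uf IHW // => [|w' /inW/fW //]; rewrite andbT.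
apply/hasPn => u /flatten_mapP[w' w'W uw']; apply/negP => uw.
have [_ keyf'] := fW w' (inW w' w'W).
by move: wW; rewrite -(keyf u uw) (keyf' u uw') w'W.
Qed.

Section Insertions.

Variables (T : eqType) (m : T) (P : pred T).

(* Every occurrence of [m] in [u] comes right after an [m] or an element of [P],
   or at the head of [u] when [hi] holds. *)
Fixpoint guarded (hi : bool) (u : seq T) : bool :=
  if u is y :: u' then ((y == m) ==> hi) && guarded ((y == m) || P y) u'
  else true.

(* The guarded interleavings of [w] with [n] copies of [m]; [hi] says whether a
   copy of [m] may be placed at the current position. *)
Fixpoint insertions (w : seq T) : bool -> nat -> seq (seq T) :=
  match w with
  | [::] => fun hi n => if hi || (n == 0) then [:: nseq n m] else [::]
  | a :: w' => fix insertions_a (hi : bool) (n : nat) {struct n} :=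
      match n with
      | 0 => map (cons a) (insertions w' (P a) 0)
      | n'.+1 => (if hi then map (cons m) (insertions_a true n') else [::])
                   ++ map (cons a) (insertions w' (P a) n)
      end
  end.

Lemma insertions_cons0 a w hi :
  insertions (a :: w) hi 0 = map (cons a) (insertions w (P a) 0).
Proof. by []. Qed.

Lemma insertions_consS a w hi n :
  insertions (a :: w) hi n.+1 =
  (if hi then map (cons m) (insertions (a :: w) true n) else [::])
    ++ map (cons a) (insertions w (P a) n.+1).
Proof. by []. Qed.

Lemma guarded_nseq hi j : guarded hi (nseq j m) = hi || (j == 0).
Proof. by elim: j hi => [|j IHj] hi /=; rewrite ?orbT // eqxx IHj; case: hi. Qed.

Lemma mem_insertions_nil hi n u :
  (u \in insertions [::] hi n) =
  [&& filter (predC1 m) u == [::], count_mem m u == n & guarded hi u].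
Proof.
apply/idP/idP => [|/and3P[/eqP u_m /eqP <-]] /=.
  case: ifP => [hi_n | _]; last by rewrite in_nil.
  rewrite mem_seq1 => /eqP ->.
  by rewrite filter_nseq count_nseq /= eqxx /= mul1n eqxx guarded_nseq hi_n.
have /all_pred1P -> : all (pred1 m) u.
  apply/allP => x ux; apply/negPn/negP => xm.
  have : x \in filter (predC1 m) u by rewrite mem_filter ux andbT.
  by rewrite u_m.
by rewrite count_nseq /= eqxx mul1n guarded_nseq => ->; rewrite mem_seq1.
Qed.

Lemma mem_insertions w : m \notin w -> forall hi n u,
  (u \in insertions w hi n) =
  [&& filter (predC1 m) u == w, count_mem m u == n & guarded hi u].
Proof.
elim: w => [_ | a w IHw /[!inE] /norP[ma mw]]; first exact: mem_insertions_nil.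
have am : (a == m) = false by rewrite eq_sym (negbTE ma).
have cons_a hi n u : (a :: u \in map (cons a) (insertions w (P a) n)) =
    [&& filter (predC1 m) (a :: u) == a :: w, count_mem m (a :: u) == n
      & guarded hi (a :: u)].
  by rewrite mem_map_cons eqxx IHw //= am /= eqseq_cons eqxx.
move=> + n; elim: n => [|n IHn] hi [|y u].
- by rewrite insertions_cons0 (negbTE (nil_notin_map_cons _ _)).
- rewrite insertions_cons0; case: (eqVneq y a) => [->|ya]; first exact: cons_a.
  rewrite mem_map_cons (negbTE ya) /=.
  case: (eqVneq y m) => [->|ym] /=; first by rewrite andbF.
  by rewrite eqseq_cons (negbTE ya).
- rewrite insertions_consS mem_cat (negbTE (nil_notin_map_cons _ _)) orbF.
  by case: hi; rewrite ?in_nil ?(negbTE (nil_notin_map_cons _ _)).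
rewrite insertions_consS mem_cat.
case: (eqVneq y m) => [->|ym].
  rewrite mem_map_cons (negbTE ma) orbF.
  case: hi; rewrite ?in_nil ?mem_map_cons ?eqxx ?IHn /= eqxx /= ?add1n ?andbF //.
have -> : (y :: u \in (if hi then map (cons m) (insertions (a :: w) true n)
                       else [::])) = false.
  by case: hi; rewrite ?mem_map_cons ?(negbTE ym).
case: (eqVneq y a) => [->|ya]; first exact: cons_a.
by rewrite mem_map_cons (negbTE ya) /= (negbTE ym) /= eqseq_cons (negbTE ya).
Qed.

Lemma uniq_insertions w : m \notin w -> forall hi n, uniq (insertions w hi n).
Proof.
have cons_inj (c : T) : injective (cons c) by move=> ? ? [].
elim: w => [_ hi n | a w IHw /[!inE] /norP[ma mw] + n].
  by rewrite /=; case: ifP.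
elim: n => [|n IHn] hi; first by rewrite insertions_cons0 map_inj_uniq // IHw.
rewrite insertions_consS cat_uniq map_inj_uniq // IHw // andbT.
case: hi; last by apply/hasPn => ? _; rewrite in_nil.
rewrite (map_inj_uniq (cons_inj m)) IHn; apply/hasPn => _ /mapP[u _ ->].
by rewrite mem_map_cons negb_and eq_sym ma.
Qed.

Lemma size_insertions w hi n :
  size (insertions w hi n) = 'C((count P w + hi + n).-1, n).
Proof.
elim: w hi n => [|a w IHw] hi n.
  by case: hi; case: n => [|n] //=; rewrite ?binn ?bin_small.
elim: n hi => [|n IHn] hi; first by rewrite insertions_cons0 size_map IHw !bin0.
rewrite insertions_consS size_cat size_map IHw [count P w + _]addnC.
case: hi; rewrite ?size_map ?IHn /= ?add0n ?addn0 // addn1 !addnS /=.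
by rewrite binS addnC.
Qed.

End Insertions.

Lemma count_permutations_cat_nseq (T : eqType) (m : T) (P : pred T)
    (Q : pred (seq T)) (s : seq T) n :
  m \notin s ->
  (forall u, perm_eq u (s ++ nseq n m) ->
     Q u = Q (filter (predC1 m) u) && guarded m P true u) ->
  count Q (permutations (s ++ nseq n m)) =
  count Q (permutations s) * 'C(count P s + n, n).
Proof.
move=> ms Q_split; set W := filter Q (permutations s).
have memW w : w \in W = Q w && perm_eq w s by rewrite mem_filter mem_permutations.
have mW w : w \in W -> m \notin w by rewrite memW => /andP[_ /perm_mem ->].
have perm_arrangements : perm_eq (filter Q (permutations (s ++ nseq n m)))
                                 (flatten [seq insertions m P w true n | w <- W]).
  apply: uniq_perm; first by rewrite filter_uniq ?permutations_uniq.
    apply: (uniq_flatten_map (key := filter (predC1 m))).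
      by rewrite filter_uniq ?permutations_uniq.
    move=> w wW; split; first exact: uniq_insertions (mW w wW) _ _.
    by move=> u; rewrite mem_insertions ?mW // => /andP[/eqP].
  move=> u; rewrite mem_filter mem_permutations; apply/andP/flatten_mapP.
    case=> Qu su; move: (su); rewrite perm_cat_nseq // => /andP[fs cu].
    move: Qu; rewrite Q_split // => /andP[Qf gu].
    exists (filter (predC1 m) u); first by rewrite memW Qf fs.
    have mf : m \notin filter (predC1 m) u by rewrite (perm_mem fs).
    by rewrite mem_insertions // eqxx cu gu.
  case=> w wW; rewrite mem_insertions ?mW // => /and3P[/eqP fu cu gu].
  move: wW; rewrite memW -fu => /andP[Qf fs].
  have su : perm_eq u (s ++ nseq n m) by rewrite perm_cat_nseq // fs cu.
  by rewrite Q_split //; split; first apply/andP.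
rewrite -[count Q (permutations (s ++ _))]size_filter -[count Q _]size_filter.
rewrite (perm_size perm_arrangements) size_flatten /shape -map_comp.
rewrite sumnE big_map (eq_big_seq (fun=> 'C(count P s + n, n))) => [|w].
  by rewrite big_const_seq count_predT iter_addn_0 mulnC.
by rewrite memW => /andP[_ ws]; rewrite /= size_insertions addn1 (permP ws).
Qed.

Lemma path_vn_step_split k m x u : x <= m -> all (fun y => y <= m) u ->
  path (vn_step k) x u =
  path (vn_step k) x (filter (predC1 m) u)
    && guarded m (fun y => m - k <= y) (m - k <= x) u.
Proof.
elim: u x => //= y u IHu x xm /andP[ym um].
case: (eqVneq y m) => [->|ny] /=; last by rewrite IHu // andbA.
rewrite IHu // leq_subr /vn_step [x + k]addnC -leq_subLR.
case: (leqP (m - k) x) => [mkx | _]; last by rewrite andbF.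
have : all (fun z => z < m) (filter (predC1 m) u).
  rewrite all_filter; apply: sub_all um => z zm.
  by apply/implyP => /= nz; rewrite ltn_neqAle nz zm.
case: (filter (predC1 m) u) => //= z v /andP[zm _].
have -> : z <= m + k by lia.
by have -> : z <= x + k by lia.
Qed.

Lemma sorted_vn_step_split k m u : all (fun y => y <= m) u ->
  sorted (vn_step k) u =
  sorted (vn_step k) (filter (predC1 m) u)
    && guarded m (fun y => m - k <= y) true u.
Proof.
have sorted_path v :
    all (fun y => y <= m) v -> sorted (vn_step k) v = path (vn_step k) m v.
  by case: v => //= y v /andP[ym _]; rewrite /vn_step (leq_trans ym (leq_addr k m)).
move=> um; rewrite sorted_path // (path_vn_step_split k (leqnn m) um) leq_subr.
by rewrite sorted_path // all_filter; apply: sub_all um => y ym; apply/implyP.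
Qed.

Lemma count_vn_arrangements_cat_nseq k m s n : all (fun x => x < m) s ->
  count (is_vn_arrangement k) (permutations (s ++ nseq n m)) =
  count (is_vn_arrangement k) (permutations s)
    * 'C(count (fun x => m - k <= x) s + n, n).
Proof.
move=> sm; apply: count_permutations_cat_nseq => [|u su].
  by apply/negP => /(allP sm); rewrite ltnn.
apply: sorted_vn_step_split; apply/allP => y; rewrite (perm_mem su) mem_cat.
by case/orP => [/(allP sm)/ltnW | /nseqP[-> _]].
Qed.

Lemma count_flatten_nseq_iota (P : pred nat) b n :
  count P (flatten [seq nseq (b i) i | i <- iota 0 n]) =
  \sum_(0 <= i < n | P i) b i.
Proof.
rewrite count_flatten sumnE !big_map [RHS]big_mkcond /index_iota subn0.
by apply eq_bigr => i _; rewrite count_nseq; case: (P i); rewrite ?mul1n.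
Qed.

Lemma count_vn_arrangements_blocks k b n :
  count (is_vn_arrangement k)
        (permutations (flatten [seq nseq (b i) i | i <- iota 0 n])) =
  \prod_(0 <= i < n) 'C(\sum_(i - k <= j < i.+1) b j, b i).
Proof.
elim: n => [|n IHn]; first by rewrite big_geq.
rewrite -addn1 iotaD map_cat flatten_cat /= cats0 add0n.
rewrite count_vn_arrangements_cat_nseq; last first.
  by apply/allP => x /flatten_mapP[i]; rewrite mem_iota => /andP[_ ?] /nseqP[-> _].
rewrite IHn count_flatten_nseq_iota addn1 big_nat_recr //=; congr (_ * 'C(_, _)).
by rewrite big_nat_recr ?leq_subr //= big_mkord big_geq_mkord.
Qed.

Lemma multinomial_iota b n :
  multinomial [seq b i | i <- iota 0 n] =
  \prod_(0 <= i < n) 'C(\sum_(0 <= j < i.+1) b j, b i).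
Proof.
have fact_sum : (\sum_(0 <= i < n) b i)`! =
    \prod_(0 <= i < n) 'C(\sum_(0 <= j < i.+1) b j, b i)
      * \prod_(0 <= i < n) (b i)`!.
  elim: n => [|n IHn]; first by rewrite !big_geq.
  rewrite !big_nat_recr //= -(bin_fact (leq_addl _ (b n))) addnK IHn.
  by rewrite mulnACA [LHS]mulnA [LHS]mulnC.
have -> : iota 0 n = index_iota 0 n by rewrite /index_iota subn0.
rewrite /multinomial sumnE !big_map fact_sum.
by rewrite mulnK // prodn_gt0 // => i; apply: fact_gt0.
Qed.

Theorem proposition4p3 (t : nat) (b : nat -> nat) (k : nat) (hk : k <= t) :
  num_vn_arrangements t b k =
  multinomial [seq b i | i <- iota 0 k.+1] *
  \prod_(1 <= i < (t - k).+1) 'C(\sum_(i <= j < (i + k).+1) b j, b (i + k)).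
Proof.
rewrite /num_vn_arrangements /vn_multiset count_vn_arrangements_blocks.
rewrite (big_cat_nat (n := k.+1)) // multinomial_iota /=; congr (_ * _).
  by apply: eq_big_nat => i /andP[_ ik]; rewrite (eqP (_ : i - k == 0)) // subn_eq0.
rewrite -{1}[k.+1]add1n big_addn subSn //.
by apply: eq_bigr => i _; rewrite addnK.
Qed.
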